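(* Suppose $m=0$ (purely deterministic problem). Then for every integer $k\ge1$ and $\tau\in T$: if $\mathfrak{h}(\tau)=k$ then $\rho(\tau)\ge k$; if $\mathfrak{r}(\tau)=k$ then $\rho(\tau)\ge2k-1$; if $\mathfrak{d}(\tau)=k$ then $\rho(\tau)\ge2^k-1$. The same holds for $u\in U_f$ with $\mathfrak{h}',\mathfrak{r}',\mathfrak{d}'$ in place of $\mathfrak{h},\mathfrak{r},\mathfrak{d}$.
   Context: With $m=0$, $T$ is the set of rooted trees (all vertices of the single color $0$): the empty tree $\emptyset$ and all $\tau=[\tau_1,\dots,\tau_\kappa]_0$, $\kappa\ge0$, $\tau_j\in T\setminus\{\emptyset\}$ unordered (new root joined to the roots of the $\tau_j$; $\bullet_0$ if $\kappa=0$). Order: $\rho(\emptyset)=0$, $\rho([\tau_1,\dots,\tau_\kappa]_0)=1+\sum_j\rho(\tau_j)$ (the number of vertices). $U_f$: trees $u=[\tau_1,\dots,\tau_\kappa]_f$, $\kappa\ge0$, $\tau_j\in T\setminus\{\emptyset\}$, $\rho(u)=\sum_j\rho(\tau_j)$, $\mathfrak{g}'(u)=\max_j\mathfrak{g}(\tau_j)$. Maxima over empty sets are $0$. $\mathfrak{h}(\emptyset)=0$, $\mathfrak{h}(\bullet_0)=1$, $\mathfrak{h}([\tau_1,\dots,\tau_\kappa]_0)=1+\max_j\mathfrak{h}(\tau_j)$; $\mathfrak{r}(\emptyset)=0$, $\mathfrak{r}(\bullet_0)=1$, $\mathfrak{r}([\tau_1]_0)=\mathfrak{r}(\tau_1)$,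 $\mathfrak{r}([\tau_1,\dots,\tau_\kappa]_0)=1+\max_j\mathfrak{r}(\tau_j)$ for $\kappa\ge2$; $\mathfrak{d}(\emptyset)=0$, $\mathfrak{d}(\bullet_0)=1$, $\mathfrak{d}([\tau_1,\dots,\tau_\kappa]_0)=M$ if exactly one $i$ has $\mathfrak{d}(\tau_i)=M:=\max_j\mathfrak{d}(\tau_j)$, and $M+1$ if at least two indices attain $M$. *)

From mathcomp Require Import all_boot.
Set Implicit Arguments. Unset Strict Implicit. Unset Printing Implicit Defensive.

(* Nonempty rooted trees with all vertices of the single color 0 (m = 0):
   [Node [:: t1; ...; tk]] is [t1,...,tk]_0 (new root joined to the roots of
   the t_j); [Node [::]] is the single vertex bullet_0.  The children are
   stored as a list, but every function below is symmetric in the children,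
   so this faithfully represents unordered trees. *)
Inductive rtree : Type := Node of seq rtree.

(* The set T: the empty tree (None) or a nonempty tree (Some t). *)
Definition Ttree := option rtree.

Definition maxl (s : seq nat) : nat := foldr maxn 0 s.

Fixpoint rho (t : rtree) : nat :=
  match t with Node l => 1 + sumn (map rho l) end.

Fixpoint hgt (t : rtree) : nat :=
  match t with Node l => 1 + maxl (map hgt l) end.

Fixpoint rfun (t : rtree) : nat :=
  match t with
  | Node [::] => 1
  | Node [:: t1] => rfun t1
  | Node l => 1 + maxl (map rfun l)
  end.

Fixpoint dfun (t : rtree) : nat :=
  match t with
  | Node [::] => 1
  | Node l =>
      let vs := map dfun l in
      let M := maxl vs in
      if 2 <= count (pred1 M) vs then M.+1 else M
  end.

Definition rhoT (t : Ttree) : nat := if t is Some t' then rho t' else 0.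
Definition hT (t : Ttree) : nat := if t is Some t' then hgt t' else 0.
Definition rT (t : Ttree) : nat := if t is Some t' then rfun t' else 0.
Definition dT (t : Ttree) : nat := if t is Some t' then dfun t' else 0.

(* U_f: u = [t1,...,tk]_f with nonempty t_j; represented by its list of
   children.  rho(u) = sum rho(t_j), g'(u) = max g(t_j). *)
Definition Uf := seq rtree.
Definition rhoU (u : Uf) : nat := sumn (map rho u).
Definition hU' (u : Uf) : nat := maxl (map hgt u).
Definition rU' (u : Uf) : nat := maxl (map rfun u).
Definition dU' (u : Uf) : nat := maxl (map dfun u).

(* Each bound is proved for nonempty trees by structural induction, in the
   uniform form h <= rho, 2 r <= rho + 1 and 2 ^ d <= rho + 1, which then also
   holds trivially for the empty tree and passes to U_f by summing over the
   children.  For r, a root with two or more children gains 1 in r while the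
   children other than the one attaining the maximum contribute at least one
   vertex.  For d, if c children attain the maximum M, they contribute at least
   c (2 ^ M - 1) vertices, which pays for the increment when c >= 2. *)

From mathcomp Require Import all_boot.
From mathcomp Require Import zify.
From Stdlib Require List.
Import List (Forall, Forall_nil, Forall_cons, Forall_cons_iff, Forall_forall).

Set Implicit Arguments.
Unset Strict Implicit.

Fixpoint rtree_nested_ind (P : rtree -> Prop)
    (IH : forall l, Forall P l -> P (Node l)) (t : rtree) : P t :=
  let: Node l := t in
  IH l ((fix children (l : seq rtree) : Forall P l :=
           if l is x :: l' return Forall P l
           then @Forall_cons _ P x l' (rtree_nested_ind IH x) (children l')
           else Forall_nil P) l).

Lemma Forall_of_all T (P : T -> Prop) (l : seq T) :
  (forall x, P x) -> Forall P l.
Proof. by move=> allP; apply/Forall_forall. Qed.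

Lemma maxl_cons a s : maxl (a :: s) = maxn a (maxl s).
Proof. by []. Qed.

Lemma maxl_mem s : s != [::] -> maxl s \in s.
Proof.
elim: s => [|a [|b s] IH] _ //; first by rewrite /maxl /= maxn0 inE.
rewrite maxl_cons in_cons; case: leqP => _; last by rewrite eqxx.
by rewrite IH ?orbT.
Qed.

Lemma count_maxl_gt0 s : s != [::] -> 0 < count (pred1 (maxl s)) s.
Proof.
by move/maxl_mem=> Ms; rewrite -has_count; apply/hasP; exists (maxl s) => /=.
Qed.

Lemma rho_gt0 t : 0 < rho t.
Proof. by case: t. Qed.

Section SumBounds.

Variables (T : Type) (f g : T -> nat).

Lemma maxl_le_sumn l :
  Forall (fun x => f x <= g x) l -> maxl (map f l) <= sumn (map g l).
Proof.
elim: l => [|a l IH] // /Forall_cons_iff[fa /IH]; rewrite map_cons maxl_cons /=; lia.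
Qed.

Lemma double_maxl_le_sumn l :
  Forall (fun x => 2 * f x <= g x + 1) l ->
  2 * maxl (map f l) <= sumn (map g l) + 1.
Proof.
elim: l => [|a l IH] // /Forall_cons_iff[fa /IH]; rewrite map_cons maxl_cons /=; lia.
Qed.

(* With at least two summands, the extra 1 is absorbed by a second child. *)
Lemma double_maxl_le_sumn2 a b l :
  (forall x, 0 < g x) ->
  Forall (fun x => 2 * f x <= g x + 1) [:: a, b & l] ->
  2 * maxl (map f [:: a, b & l]) <= sumn (map g [:: a, b & l]).
Proof.
move=> g_gt0 /Forall_cons_iff[fa /double_maxl_le_sumn].
rewrite !map_cons !maxl_cons /=; have := g_gt0 a; have := g_gt0 b; lia.
Qed.

Lemma count_mul_exp_le_sumn M l :
  Forall (fun x => 2 ^ f x <= g x + 1) l ->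
  count (pred1 M) (map f l) * (2 ^ M - 1) <= sumn (map g l).
Proof.
elim: l => [|a l IH] //= /Forall_cons_iff[fa /IH]; case: eqP => [<-|_] /=; lia.
Qed.

Lemma exp_maxl_le_sumn l :
  Forall (fun x => 2 ^ f x <= g x + 1) l ->
  2 ^ maxl (map f l) <= sumn (map g l) + 1.
Proof.
case: l => [|a l] // fl.
have := count_mul_exp_le_sumn (maxl (map f (a :: l))) fl.
have := @count_maxl_gt0 (map f (a :: l)) isT.
have := expn_gt0 2 (maxl (map f (a :: l))); nia.
Qed.

End SumBounds.

Lemma hgt_le_rho t : hgt t <= rho t.
Proof. by elim/rtree_nested_ind: t => l /maxl_le_sumn /=; lia. Qed.

Lemma double_rfun_le_rho t : 2 * rfun t <= rho t + 1.
Proof.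
elim/rtree_nested_ind: t => -[|a [|b l]] //.
  by move=> /Forall_cons_iff[/= fa _]; lia.
by move=> /(double_maxl_le_sumn2 rho_gt0) /=; lia.
Qed.

(* The exponent is [dfun] of a node whose children have [dfun]-values [vs] and
   total size [S]. *)
Lemma exp_dfun_step vs S : vs != [::] ->
  count (pred1 (maxl vs)) vs * (2 ^ maxl vs - 1) <= S ->
  2 ^ (if 2 <= count (pred1 (maxl vs)) vs then (maxl vs).+1 else maxl vs)
    <= 1 + S + 1.
Proof.
move=> /count_maxl_gt0; set M := maxl vs; set c := count _ _ => c_gt0 cM.
have := expn_gt0 2 M.
by case: ifP => c2; rewrite ?expnS; nia.
Qed.

Lemma exp_dfun_le_rho t : 2 ^ dfun t <= rho t + 1.
Proof.
elim/rtree_nested_ind: t => -[|a l] // fl.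
exact/exp_dfun_step/count_mul_exp_le_sumn.
Qed.

Lemma hT_le_rhoT tau : hT tau <= rhoT tau.
Proof. by case: tau => [t|] //; apply: hgt_le_rho. Qed.

Lemma double_rT_le_rhoT tau : 2 * rT tau <= rhoT tau + 1.
Proof. by case: tau => [t|] //; apply: double_rfun_le_rho. Qed.

Lemma exp_dT_le_rhoT tau : 2 ^ dT tau <= rhoT tau + 1.
Proof. by case: tau => [t|] //; apply: exp_dfun_le_rho. Qed.

Lemma hU'_le_rhoU u : hU' u <= rhoU u.
Proof. exact/maxl_le_sumn/Forall_of_all/hgt_le_rho. Qed.

Lemma double_rU'_le_rhoU u : 2 * rU' u <= rhoU u + 1.
Proof. exact/double_maxl_le_sumn/Forall_of_all/double_rfun_le_rho. Qed.

Lemma exp_dU'_le_rhoU u : 2 ^ dU' u <= rhoU u + 1.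
Proof. exact/exp_maxl_le_sumn/Forall_of_all/exp_dfun_le_rho. Qed.

Theorem mainTheorem11 :
  (forall (k : nat) (tau : Ttree), 1 <= k ->
     [/\ hT tau = k -> k <= rhoT tau,
         rT tau = k -> 2 * k - 1 <= rhoT tau
       & dT tau = k -> 2 ^ k - 1 <= rhoT tau]) /\
  (forall (k : nat) (u : Uf), 1 <= k ->
     [/\ hU' u = k -> k <= rhoU u,
         rU' u = k -> 2 * k - 1 <= rhoU u
       & dU' u = k -> 2 ^ k - 1 <= rhoU u]).
Proof.
split=> k x _; split=> <-.
- exact: hT_le_rhoT.
- by have := double_rT_le_rhoT x; lia.
- by have := exp_dT_le_rhoT x; lia.
- exact: hU'_le_rhoU.
- by have := double_rU'_le_rhoU x; lia.
- by have := exp_dU'_le_rhoU x; lia.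
Qed.
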